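(* Let $r_A^{(1)}, r_B^{(1)}, r_A^{(2)}, r_B^{(2)} > 0$ be the initial reserves of two zero-fee constant-product pools $P_1, P_2$ trading assets $A$ and $B$, and let $a>0$. Then there exist $x \in (0, r_A^{(2)})$ and $y>0$ such that the following four-step atomic sequence is well defined and realizes the migration of exactly $a$ units of $A$. \begin{enumerate} \item Step 1: $x+a$ units of $A$ are input to $P_1$, which outputs $b=\dfrac{r_B^{(1)}(x+a)}{r_A^{(1)}+x+a}$ units of $B$. Of this input, $a$ units come from the principal and $x$ units come from flash liquidity. \item Step 2: the $b$ units of $B$ are input to $P_2$, which outputs exactly $x$ units of $A$; these repay the flash liquidity. This step requires \[ b=\frac{r_B^{(2)}x}{r_A^{(2)}-x}, \] equivalently the consistency condition \[ r_B^{(1)}(x+a)(r_A^{(2)}-x)=r_B^{(2)}x\,(r_A^{(1)}+x+a). \] \item Step 3: $y$ units of $A$ are input to $P_2$, now in state $(r_A^{(2)}-x,\ r_B^{(2)}+b)$, which outputs \[ b'=\frac{r_A^{(2)}r_B^{(2)}y}{(r_A^{(2)}-x)(r_A^{(2)}-x+y)} \] units of $B$. \item Step 4: the $b'$ units of $B$ are input to $P_1$, now in state $(r_A^{(1)}+x+a,\ r_B^{(1)}-b)$, which outputs \[ y+a'=\frac{(r_A^{(1)}+x+a)\,b'}{r_B^{(1)}-b+b'} \] units of $A$. Of this output, $y$ units repay Step 3 and $a'$ units go to the beneficiary. \end{enumerate} For these $x$ and $y$, one has $a'=a$. Consequently, over the whole sequence, the principal's balance of $A$ changes by $-a$ and the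 beneficiary's balance of $A$ changes by $+a$.
   Context: Model conventions: \begin{itemize} \item A zero-fee constant-product pool $i$ with reserves $(r_A^{(i)}, r_B^{(i)})$ keeps the product $r_A^{(i)} r_B^{(i)}=k_i$ invariant under every swap. Inputting $\delta$ of one asset therefore outputs the amount of the other asset that keeps this product unchanged. \item Each step updates the reserves of the pool it acts on, and later steps use the updated reserves. \item The principal supplies the $a$ units of $A$. \item The beneficiary receives the $a'$ units of $A$. \item Flash liquidity of $x$ units of $A$ must be repaid within the same atomic execution. \end{itemize} *)

From HB Require Import structures.
From mathcomp Require Import all_boot all_order all_algebra.
From mathcomp Require Import reals.
Set Implicit Arguments. Unset Strict Implicit. Unset Printing Implicit Defensive.
Import Order.TTheory GRing.Theory Num.Theory.
Local Open Scope ring_scope.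

(* Zero-fee constant-product swap on a pool with reserve [rin] of the input
   asset and reserve [rout] of the output asset: inputting [d] of the input
   asset outputs the amount that keeps the product invariant, i.e. the [o]
   with (rin + d) * (rout - o) = rin * rout. *)
Definition swap_out {R : realType} (rin rout d : R) : R :=
  rout - rin * rout / (rin + d).

(* Take y = x: Step 3 is then the exact reverse of Step 2 and Step 4 the exact
   reverse of Step 1, since feeding the output of a swap back into the updated
   pool returns the input. So both pools return to their initial states and
   Step 4 hands back the x + a units put in at Step 1, of which a are left after
   repaying y = x. What remains is a flash loan x making Step 2 consistent;
   clearing denominators, the consistency condition is a quadratic in x that is
   negative at 0 and positive at rA2, hence has a root in between. *)

From HB Require Import structures.
From mathcomp Require Import all_boot all_order all_algebra.
From mathcomp Require Import reals.
From mathcomp Require Import ring lra.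
Import Order.TTheory GRing.Theory Num.Theory.
Local Open Scope ring_scope.
Set Implicit Arguments.
Unset Strict Implicit.
Unset Printing Implicit Defensive.

Section ConstantProductSwap.
Context {R : realType}.
Implicit Types rin rout d o : R.

Definition swap_in rin rout o : R := rin * o / (rout - o).

Lemma swap_outE rin rout d :
  rin + d != 0 -> swap_out rin rout d = rout * d / (rin + d).
Proof. by move=> nz; rewrite /swap_out; field. Qed.

Lemma swap_out_reserve rin rout d :
  rout - swap_out rin rout d = rin * rout / (rin + d).
Proof. by rewrite /swap_out opprB addrC subrK. Qed.

Lemma swap_out_gt0 rin rout d :
  0 < rin -> 0 < rout -> 0 < d -> 0 < swap_out rin rout d.
Proof.
move=> rin_gt0 rout_gt0 d_gt0.
rewrite swap_outE ?gt_eqF ?addr_gt0 //.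
by rewrite divr_gt0 ?mulr_gt0 ?addr_gt0.
Qed.

Lemma swap_out_lt_reserve rin rout d :
  0 < rin -> 0 < rout -> 0 <= d -> swap_out rin rout d < rout.
Proof.
move=> rin_gt0 rout_gt0 d_ge0.
rewrite -subr_gt0 swap_out_reserve.
by rewrite divr_gt0 ?mulr_gt0 ?ltr_wpDr.
Qed.

Lemma swap_in_outK rin rout o :
  0 < rin -> 0 <= o < rout -> swap_out rin rout (swap_in rin rout o) = o.
Proof.
move=> rin_gt0 /andP[o_ge0 o_lt]; have ro_gt0 : 0 < rout - o by rewrite subr_gt0.
have rout_gt0 : 0 < rout by apply: le_lt_trans o_lt.
rewrite /swap_out /swap_in.
have -> : rin + rin * o / (rout - o) = rin * rout / (rout - o).
  by field; rewrite gt_eqF.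
by field; rewrite !gt_eqF.
Qed.

Lemma swap_out_roundtrip rin rout d :
  0 < rin -> 0 < rout -> 0 <= d ->
  let o := swap_out rin rout d in swap_out (rout - o) (rin + d) o = d.
Proof.
move=> rin_gt0 rout_gt0 d_ge0 o.
have ind_gt0 : 0 < rin + d by rewrite ltr_wpDr.
rewrite {1}/swap_out subrK /o swap_out_reserve.
by field; rewrite !gt_eqF.
Qed.

End ConstantProductSwap.

Lemma quadratic_root_between (R : rcfType) (p q c u : R) :
  0 < p -> 0 < c -> 0 < u -> 0 < p * u ^+ 2 - q * u - c ->
  exists x, [/\ 0 < x, x < u & p * x ^+ 2 - q * x - c = 0].
Proof.
move=> p_gt0 c_gt0 u_gt0 fu_gt0.
have disc_ge0 : 0 <= q ^+ 2 + 4 * p * c by nra.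
set s := Num.sqrt (q ^+ 2 + 4 * p * c).
have s_sq : s ^+ 2 = q ^+ 2 + 4 * p * c by rewrite sqr_sqrtr.
have s_ge0 : 0 <= s by exact: sqrtr_ge0.
have p2_gt0 : 0 < 2 * p by rewrite mulr_gt0.
exists ((q + s) / (2 * p)); split.
- by rewrite divr_gt0 //; nra.
- rewrite ltr_pdivrMr //.
  have upq_gt0 : 0 < p * u - q by nra.
  have sq_lt : s ^+ 2 < (2 * p * u - q) ^+ 2.
    rewrite s_sq -subr_gt0.
    have -> : (2 * p * u - q) ^+ 2 - (q ^+ 2 + 4 * p * c)
      = 4 * p * (p * u ^+ 2 - q * u - c) by ring.
    by rewrite !mulr_gt0.
  have T_gt0 : 0 < 2 * p * u - q by nra.
  have : s < 2 * p * u - q by rewrite -(@ltr_pXn2r _ 2) ?nnegrE ?(ltW T_gt0).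
  lra.
- have -> : p * ((q + s) / (2 * p)) ^+ 2 - q * ((q + s) / (2 * p)) - c
      = (s ^+ 2 - (q ^+ 2 + 4 * p * c)) / (4 * p).
    by field; rewrite gt_eqF.
  by rewrite s_sq subrr mul0r.
Qed.

Lemma exists_consistent_flash_loan (R : realType) (rA1 rB1 rA2 rB2 a : R) :
  0 < rA1 -> 0 < rB1 -> 0 < rA2 -> 0 < rB2 -> 0 < a ->
  exists x, [/\ 0 < x, x < rA2 &
                swap_out rA1 rB1 (x + a) = swap_in rB2 rA2 x].
Proof.
move=> rA1_gt0 rB1_gt0 rA2_gt0 rB2_gt0 a_gt0.
set p := rB1 + rB2.
set q := rB1 * rA2 - rB1 * a - rB2 * (rA1 + a).
set c := rB1 * a * rA2.
have p_gt0 : 0 < p by rewrite addr_gt0.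
have c_gt0 : 0 < c by rewrite !mulr_gt0.
have frA2_gt0 : 0 < p * rA2 ^+ 2 - q * rA2 - c.
  have -> : p * rA2 ^+ 2 - q * rA2 - c = rB2 * rA2 * (rA1 + rA2 + a).
    by rewrite /p /q /c; ring.
  by rewrite !mulr_gt0 ?addr_gt0.
have [x [x_gt0 x_lt froot]] := quadratic_root_between p_gt0 c_gt0 rA2_gt0 frA2_gt0.
exists x; split => //; apply/eqP; rewrite -subr_eq0; apply/eqP.
have ax_gt0 : 0 < rA1 + (x + a) by rewrite !addr_gt0.
have rx_gt0 : 0 < rA2 - x by rewrite subr_gt0.
have -> : swap_out rA1 rB1 (x + a) - swap_in rB2 rA2 x
    = - (p * x ^+ 2 - q * x - c) / ((rA1 + (x + a)) * (rA2 - x)).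
  by rewrite swap_outE ?gt_eqF // /swap_in /p /q /c; field; rewrite !gt_eqF.
by rewrite froot oppr0 mul0r.
Qed.

Theorem mainTheorem1 (R : realType) (rA1 rB1 rA2 rB2 a : R) :
  0 < rA1 -> 0 < rB1 -> 0 < rA2 -> 0 < rB2 -> 0 < a ->
  exists x y : R,
    [/\ 0 < x, x < rA2 & 0 < y] /\
    let b := swap_out rA1 rB1 (x + a) in
    let b' := swap_out (rA2 - x) (rB2 + b) y in
    let out4 := swap_out (rB1 - b) (rA1 + x + a) b' in
    let a' := out4 - y in
    [/\ 0 < b, 0 < rB1 - b,
        swap_out rB2 rA2 b = x,
        0 < b' /\ 0 < rA2 - x + y &
        a' = a].
Proof.
move=> rA1_gt0 rB1_gt0 rA2_gt0 rB2_gt0 a_gt0.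
have [x [x_gt0 x_lt b_eq]] :=
  exists_consistent_flash_loan rA1_gt0 rB1_gt0 rA2_gt0 rB2_gt0 a_gt0.
exists x, x; split => // b b' out4 a'.
have xa_gt0 : 0 < x + a by rewrite addr_gt0.
have b_gt0 : 0 < b by rewrite swap_out_gt0.
have flash_repaid : swap_out rB2 rA2 b = x by rewrite /b b_eq swap_in_outK // ltW.
have b'E : b' = b.
  by rewrite /b' -{1 2}flash_repaid swap_out_roundtrip // ltW.
have out4E : out4 = x + a.
  by rewrite /out4 b'E -addrA swap_out_roundtrip // ltW.
split => //.
- by rewrite subr_gt0 swap_out_lt_reserve // ltW.
- by rewrite b'E; split => //; rewrite subrK.
- by rewrite /a' out4E addrAC subrr add0r.
Qed.
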